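(* Let $c\ge2$, $q\in[0,c-1]$, and let $\Gamma$ be a $c$-uniform unoriented hypergraph with $E\ne\varnothing$ and no isolated vertices, with smallest normalized Laplacian eigenvalue $\lambda_1$ and with $\chi^{q\text{-t}}=\chi^{q\text{-t}}(\Gamma)\ge2$. If $\chi^{q\text{-t}}=\dfrac{c-\lambda_1}{q+1-\lambda_1}$, then for every $q$-tailored $\chi^{q\text{-t}}$-coloring with color classes $V_1,\dots,V_{\chi^{q\text{-t}}}$: for every $i$ and every $v\in V_i$, $\sum_{w\in V_i}|A_{v,w}|=q\deg v$; and for all distinct $i,j$, the function $g_{ij}$ is an eigenfunction of $L$ with eigenvalue \[ \lambda_1=\frac{(q+1)\chi^{q\text{-t}}-c}{\chi^{q\text{-t}}-1}. \]
   Context: A hypergraph has finite vertex set $V$ and edge set $E\subseteq\mathcal P(V)$; it is $c$-uniform if $|e|=c$ for all $e$, and unoriented means all incidences have orientation $+1$. $\deg v=|\{e\in E: v\in e\}|\ge1$, $D=\mathrm{diag}(\deg v)$, adjacency $A_{v,v}=0$ and $A_{v,w}=-|\{e\in E: v,w\in e\}|$ for $v\ne w$, normalized Laplacian $L=\mathrm{Id}-D^{-1}A$ with eigenvalues $\lambda_1\le\dots\le\lambda_N$. For $q\in[0,c-1]$, a $k$-coloring with color classes $V_1,\dots,V_k$ is $q$-tailored if for all $i$ and all $v\in V_i$, $\sum_{w\in V_i}|A_{v,w}|\le q\deg v$; $\chi^{q\text{-t}}$ is the least $k$ admitting one. For color classes and distinct $i,j$, $g_{ij}(w)=1$ if $w\in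 V_i$, $-1$ if $w\in V_j$, $0$ otherwise. *)

From HB Require Import structures.
From mathcomp Require Import all_boot all_order all_algebra.
From mathcomp Require Import reals.
Set Implicit Arguments. Unset Strict Implicit. Unset Printing Implicit Defensive.
Import Order.TTheory GRing.Theory Num.Theory.
Local Open Scope ring_scope.

Section Hyper.
Variable R : realType.
Variable n : nat.
Variable E : {set {set 'I_n}}.

Definition uniform (c : nat) : Prop := forall e, e \in E -> #|e| = c.

Definition hdeg (v : 'I_n) : nat := #|[set e in E | v \in e]|.

Definition no_isolated : Prop := forall v, (1 <= hdeg v)%N.

Definition hadj : 'M[R]_n :=
  \matrix_(v, w) (if v == w then 0
                  else - (#|[set e in E | (v \in e) && (w \in e)]|)%:R).

Definition hdegmx : 'M[R]_n := \matrix_(v, w) (if v == w then (hdeg v)%:R else 0).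

Definition hlap : 'M[R]_n := 1%:M - invmx hdegmx *m hadj.

Definition smallest_eigenvalue (M : 'M[R]_n) (lam : R) : Prop :=
  eigenvalue M lam /\ (forall mu, eigenvalue M mu -> lam <= mu).

(* A k-coloring is a map col : 'I_n -> 'I_k; class V_i = col^{-1}(i). *)
Definition q_tailored (q : R) (k : nat) (col : 'I_n -> 'I_k) : Prop :=
  forall v, \sum_(w | col w == col v) `|hadj v w| <= q * (hdeg v)%:R.

Definition admits_q_tailored (q : R) (k : nat) : Prop :=
  exists col : 'I_n -> 'I_k, q_tailored q col.

Definition is_chi_qt (q : R) (k : nat) : Prop :=
  admits_q_tailored q k /\ (forall k', admits_q_tailored q k' -> (k <= k')%N).

Definition gij (k : nat) (col : 'I_n -> 'I_k) (i j : 'I_k) : 'cV[R]_n :=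
  \col_w (if col w == i then 1 else if col w == j then -1 else 0).

Definition eigenfunction (M : 'M[R]_n) (g : 'cV[R]_n) (lam : R) : Prop :=
  g != 0 /\ M *m g = lam *: g.

End Hyper.

From HB Require Import structures.
From mathcomp Require Import classical_sets boolp topology normedtype derive.
From mathcomp Require Import all_boot all_order all_algebra.
From mathcomp Require Import reals ring lra.
Import numFieldTopology.Exports numFieldNormedType.Exports.
Set Implicit Arguments. Unset Strict Implicit. Unset Printing Implicit Defensive.
Import Order.TTheory GRing.Theory Num.Theory.
Local Open Scope ring_scope.

(* Since lam1 is the minimum of the Rayleigh quotient qform (D - A) f / qform D f,
   the form of D - A - lam1 D is positive semidefinite.  Summing it over the
   vectors g_ij of a q-tailored chi-colouring and using c-uniformity (each row
   of |A| sums to (c - 1) deg v) gives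
     2 chi * sum_v (sum_(w ~ v) |A_vw| - q deg v),
   once the hypothesis on chi is rewritten as lam1 (chi - 1) = (q + 1) chi - c.
   The left-hand side is a sum of nonnegative terms and the right-hand side a
   sum of nonpositive ones, so every term vanishes: the colouring is tight, and
   each g_ij lies in the kernel of the semidefinite form, i.e. L g_ij = lam1 g_ij. *)

Section QuadraticForm.
Variable R : realType.

Definition qform n (X : 'M[R]_n) (f : 'rV[R]_n) : R := (f *m X *m f^T) 0 0.

Lemma qformE n (X : 'M[R]_n) f :
  qform X f = \sum_i \sum_j f 0 i * X i j * f 0 j.
Proof.
rewrite /qform mxE exchange_big; apply: eq_bigr => j _.
by rewrite !mxE mulr_suml; apply: eq_bigr => i _; rewrite ?mxE.
Qed.

Lemma continuous_qform n (X : 'M[R]_n) : continuous (qform X).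
Proof.
have -> : qform X = fun f => \sum_j (\sum_i f 0 i * X i j) * f 0 j.
  by apply: funext => f; rewrite /qform mxE; apply: eq_bigr => j _; rewrite !mxE.
apply: (continuous_big add_continuous) => j _ f.
apply: continuousM; last exact: coord_continuous.
apply: (continuous_big add_continuous) => i _ g.
by apply: continuousM; [exact: coord_continuous | exact: cst_continuous].
Qed.

Lemma qform0 n (X : 'M[R]_n) : qform X 0 = 0.
Proof. by rewrite /qform !mul0mx mxE. Qed.

Lemma qformZ n (X : 'M[R]_n) a f : qform X (a *: f) = a ^+ 2 * qform X f.
Proof. by rewrite /qform !linearZ /= -!scalemxAl !scalerA !mxE -expr2. Qed.

Lemma qformBl n (X Y : 'M[R]_n) f : qform (X - Y) f = qform X f - qform Y f.
Proof. by rewrite /qform mulmxBr mulmxBl !mxE. Qed.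

Lemma qformZl n (X : 'M[R]_n) a f : qform (a *: X) f = a * qform X f.
Proof. by rewrite /qform -scalemxAr -scalemxAl !mxE. Qed.

Lemma qform_diag n (d f : 'rV[R]_n) :
  qform (diag_mx d) f = \sum_i d 0 i * f 0 i ^+ 2.
Proof.
rewrite qformE; apply: eq_bigr => i _.
rewrite (bigD1 i) //= big1 ?addr0 => [|j /negbTE ji].
  by rewrite !mxE eqxx mulr1n expr2 mulrCA mulrA.
by rewrite !mxE eq_sym ji mulr0n mulr0 mul0r.
Qed.

Lemma qform_diag_ge_coord n (d : 'rV[R]_n) (f : 'rV[R]_n) i : (forall j, 0 <= d 0 j) ->
  d 0 i * f 0 i ^+ 2 <= qform (diag_mx d) f.
Proof.
move=> d0; rewrite qform_diag (bigD1 i) //= lerDl.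
by apply: sumr_ge0 => j _; rewrite mulr_ge0 ?sqr_ge0.
Qed.

Lemma qform_diag_gt0 n (d f : 'rV[R]_n) : (forall j, 0 < d 0 j) ->
  f != 0 -> 0 < qform (diag_mx d) f.
Proof.
move=> d0 f0; have [i fi] : exists i, f 0 i != 0.
  case: (pickP (fun i => f 0 i != 0)) => [i fi|f_eq0]; first by exists i.
  by case/eqP: f0; apply/rowP => i; rewrite mxE; apply/eqP/negbFE/f_eq0.
apply: lt_le_trans (qform_diag_ge_coord f i (fun j => ltW (d0 j))).
by rewrite mulr_gt0 ?exprn_even_gt0.
Qed.

(* The kernel of a positive semidefinite form is its null space: expand
   [0 <= Q(g + t e_j)] and take [t] of the sign opposite to [(g X)_j]. *)
Lemma psd_qform_kernel n (X : 'M[R]_n) g :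
  X^T = X -> (forall f, 0 <= qform X f) -> qform X g = 0 -> g *m X = 0.
Proof.
move=> Xs Xpsd g0; apply/rowP => j; rewrite [RHS]mxE.
set e : 'rV[R]_n := delta_mx 0 j.
have gXe : (g *m X *m e^T) 0 0 = (g *m X) 0 j.
  rewrite mxE (bigD1 j) //= big1 ?addr0 => [|i /negbTE ij]; last by rewrite !mxE ij andbF mulr0.
  by rewrite !mxE !eqxx mulr1.
have eXg : (e *m X *m g^T) 0 0 = (g *m X) 0 j.
  have -> : e *m X *m g^T = (g *m X *m e^T)^T by rewrite !trmx_mul trmxK Xs mulmxA.
  by rewrite mxE gXe.
set b : R := (g *m X) 0 j; set a := qform X e.
have expand t : qform X (g + t *: e) = 2 * t * b + t ^+ 2 * a.
  rewrite /qform [(g + _)^T]linearD /= [(t *: e)^T]linearZ /=.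
  rewrite !mulmxDl !mulmxDr -!scalemxAl -!scalemxAr !scalerA.
  have entryD (A B : 'M[R]_1) : (A + B) 0 0 = A 0 0 + B 0 0 by rewrite mxE.
  have entryZ (A : 'M[R]_1) s : (s *: A) 0 0 = s * A 0 0 by rewrite mxE.
  rewrite !entryD !entryZ -/(qform X g) g0 eXg gXe -/(qform X e) -/a -/b.
  ring.
have a1 : 0 < a + 1 by rewrite ltr_wpDl ?Xpsd.
have a2 : 0 < a + 2 by rewrite ltr_wpDl ?Xpsd.
have := Xpsd (g + (- b / (a + 1)) *: e); rewrite expand.
have -> : 2 * (- b / (a + 1)) * b + (- b / (a + 1)) ^+ 2 * a =
          - (b ^+ 2 * (a + 2)) / (a + 1) ^+ 2 by field; rewrite gt_eqF.
rewrite pmulr_lge0 ?invr_gt0 ?exprn_gt0 // oppr_ge0 pmulr_lle0 // => b2.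
by apply/eqP; rewrite -sqrf_eq0 eq_le b2 sqr_ge0.
Qed.

Lemma compact_qform_diag_sphere n (d : 'rV[R]_n) : (forall i, 0 < d 0 i) ->
  compact (qform (diag_mx d) @^-1` [set x | x = 1])%classic.
Proof.
move=> d0; pose r i := 1 + (d 0 i)^-1.
apply: (@subclosed_compact _ _ [set v : 'rV[R]_n | forall i, `[- r i, r i]%classic (v 0 i)]).
- apply: (@preimage_closed _ _ (qform (diag_mx d))); last exact: closed_eq.
  by move=> f _; exact: continuous_qform.
- by apply: (@rV_compact _ _ (fun i => `[- r i, r i]%classic)) => i; exact: segment_compact.
- move=> v /= v1 i; rewrite /= in_itv /=.
  have : d 0 i * v 0 i ^+ 2 <= 1.
    by rewrite -v1; apply: qform_diag_ge_coord => j; exact: ltW.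
  rewrite -ler_pdivlMl // mulr1 /r => vi.
  by apply/andP; split; nra.
Qed.

Lemma generalized_rayleigh_min n (M : 'M[R]_n) (d : 'rV[R]_n) : (0 < n)%N ->
  (forall i, 0 < d 0 i) -> M^T = M ->
  exists mu, (exists2 g : 'rV[R]_n, g != 0 & g *m M = mu *: (g *m diag_mx d))
    /\ forall f, mu * qform (diag_mx d) f <= qform M f.
Proof.
move=> n0 d0 Ms; set D := diag_mx d.
set S := (qform D @^-1` [set x | x = 1])%classic.
have normalize f : f != 0 -> S ((Num.sqrt (qform D f))^-1 *: f).
  move=> f0; have Df : 0 < qform D f := qform_diag_gt0 d0 f0.
  by rewrite /S /= qformZ exprVn sqr_sqrtr ?(ltW Df) // mulVf ?gt_eqF.
have S0 : (S !=set0)%classic.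
  exists ((Num.sqrt (qform D (delta_mx 0 (Ordinal n0))))^-1 *: delta_mx 0 (Ordinal n0)).
  apply: normalize; apply/eqP => /matrixP /(_ 0 (Ordinal n0)).
  by rewrite !mxE !eqxx => /eqP; rewrite oner_eq0.
have [g /[!in_setE] Dg gmin] := EVT_min_rV S0 (compact_qform_diag_sphere d0)
  (continuous_subspaceT (@continuous_qform n M)).
have {}Dg : qform D g = 1 := Dg.
set mu := qform M g.
have ray f : mu * qform D f <= qform M f.
  have [->|f0] := eqVneq f 0; first by rewrite !qform0 mulr0.
  have Df : 0 < qform D f := qform_diag_gt0 d0 f0.
  have := gmin _ (mem_set (normalize f f0)).
  rewrite qformZ exprVn sqr_sqrtr ?(ltW Df) // -/mu => ray_f.
  by rewrite mulrC -ler_pdivlMl.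
exists mu; split => //; exists g.
  by apply: contra_eq_neq Dg => ->; rewrite qform0 eq_sym oner_neq0.
have Xs : (M - mu *: D)^T = M - mu *: D.
  by rewrite linearB /= linearZ /= Ms /D tr_diag_mx.
have Xpsd f : 0 <= qform (M - mu *: D) f by rewrite qformBl qformZl subr_ge0.
have Xg : qform (M - mu *: D) g = 0 by rewrite qformBl qformZl Dg mulr1 subrr.
have /eqP := psd_qform_kernel Xs Xpsd Xg.
by rewrite mulmxBr -scalemxAr subr_eq0 => /eqP.
Qed.

End QuadraticForm.

Lemma sum_ge0_eq_sum_le0 (R : realDomainType) (I J : finType) (a : I -> R) (b : J -> R) k :
  0 < k -> (forall i, 0 <= a i) -> (forall j, b j <= 0) ->
  \sum_i a i = k * \sum_j b j -> (forall i, a i = 0) /\ (forall j, b j = 0).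
Proof.
move=> k0 a0 b0 ab.
have sa0 : 0 <= \sum_i a i by apply: sumr_ge0.
have sb0 : \sum_j b j <= 0 by apply: sumr_le0.
have sb : \sum_j b j = 0.
  by apply/eqP; rewrite eq_le sb0 -(pmulr_rge0 _ k0) -ab sa0.
split => [i|j].
  by move: ab; rewrite sb mulr0 => /psumr_eq0P; apply.
apply/eqP; rewrite -oppr_eq0; apply/eqP; move: sb => /eqP.
rewrite -oppr_eq0 -sumrN => /eqP /psumr_eq0P; apply => // j' _.
by rewrite oppr_ge0.
Qed.

Lemma lam_relation_of_ratio (F : fieldType) (k c q lam : F) : k != 0 ->
  k = (c - lam) / (q + 1 - lam) -> lam * (k - 1) = (q + 1) * k - c.
Proof.
move=> k0 kE; have [den0|den_neq0] := eqVneq (q + 1 - lam) 0.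
  by move: k0; rewrite kE den0 invr0 mulr0 eqxx.
have h : k * (q + 1 - lam) = c - lam by rewrite kE divfK.
apply/eqP; rewrite -subr_eq0.
have -> : lam * (k - 1) - ((q + 1) * k - c) = c - lam - k * (q + 1 - lam) by ring.
by rewrite h subrr.
Qed.

Section ColorDifference.
Variables (R : realType) (n k : nat) (col : 'I_n -> 'I_k).

Definition color_diff (i j : 'I_k) : 'rV[R]_n :=
  \row_v ((col v == i)%:R - (col v == j)%:R).

Lemma sum_indicator_diff_mul (a b : 'I_k) :
  \sum_i \sum_j (((a == i)%:R - (a == j)%:R) * ((b == i)%:R - (b == j)%:R)) =
  2 * k%:R * (a == b)%:R - 2 :> R.
Proof.
have delta (c : 'I_k) (F : 'I_k -> R) : \sum_j (c == j)%:R * F j = F c.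
  rewrite (bigD1 c) //= eqxx mul1r big1 ?addr0 // => j /negbTE.
  by rewrite eq_sym => ->; rewrite mul0r.
have delta1 (c : 'I_k) : \sum_j (c == j)%:R = 1 :> R.
  by rewrite -[RHS](delta c (fun=> 1)); apply: eq_bigr => j _; rewrite mulr1.
have inner i : \sum_j (((a == i)%:R - (a == j)%:R) * ((b == i)%:R - (b == j)%:R)) =
    k%:R * ((a == i)%:R * (b == i)%:R) - (a == i)%:R - (b == i)%:R + (a == b)%:R :> R.
  rewrite (eq_bigr (fun j => ((a == i)%:R * (b == i)%:R : R) - ((a == i)%:R * (b == j)%:R
      + (b == i)%:R * (a == j)%:R) + (a == j)%:R * (b == j)%:R)) => [|j _]; last by ring.
  rewrite big_split /= sumrB big_split /= sumr_const card_ord -!mulr_sumr delta1 delta1.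
  by rewrite delta [b == a]eq_sym -mulr_natl; ring.
rewrite (eq_bigr _ (fun i _ => inner i)) !big_split /= !sumrN sumr_const card_ord.
by rewrite -mulr_sumr delta eq_sym !delta1 -mulr_natl; ring.
Qed.

Lemma sum_qform_color_diff (X : 'M[R]_n) :
  \sum_i \sum_j qform X (color_diff i j) =
  \sum_v \sum_w X v w * (2 * k%:R * (col v == col w)%:R - 2).
Proof.
under eq_bigr do under eq_bigr do rewrite qformE.
under eq_bigr do rewrite exchange_big; rewrite exchange_big.
under eq_bigr do under eq_bigr do rewrite exchange_big.
under eq_bigr do rewrite exchange_big.
apply: eq_bigr => v _; apply: eq_bigr => w _.
rewrite -sum_indicator_diff_mul mulr_sumr; apply: eq_bigr => i _.
by rewrite mulr_sumr; apply: eq_bigr => j _; rewrite !mxE; ring.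
Qed.

Lemma gij_color_diff (i j : 'I_k) : i != j -> gij R col i j = (color_diff i j)^T.
Proof.
move=> ij; apply/matrixP => v z; rewrite !mxE.
have [->|_] := eqVneq (col v) i; first by rewrite (negbTE ij) subr0.
by case: (col v == j); rewrite /= ?mulr0n ?mulr1n; ring.
Qed.

Lemma gij_neq0 (i j : 'I_k) w : col w = i -> gij R col i j != 0.
Proof.
by move=> cw; apply/eqP => /matrixP /(_ w 0); rewrite !mxE cw eqxx => /eqP; rewrite oner_eq0.
Qed.

End ColorDifference.

Section Hypergraph.
Variables (R : realType) (n : nat) (E : {set {set 'I_n}}).

Local Notation A := (hadj R E).
Local Notation D := (hdegmx R E).
Local Notation deg v := (hdeg E v)%:R.

Definition hpencil lam : 'M[R]_n := D - A - lam *: D.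

Definition class_weight k (col : 'I_n -> 'I_k) v : R :=
  \sum_(w | col w == col v) `|A v w|.

Lemma tr_hadj : A^T = A.
Proof.
apply/matrixP => v w; rewrite !mxE eq_sym; case: eqP => // _.
do 2 apply: congr1; apply: eq_card => e; rewrite !inE.
by case: (v \in e); case: (w \in e); rewrite ?andbF ?andbT.
Qed.

Lemma hadj_le0 v w : A v w <= 0.
Proof. by rewrite mxE; case: eqP => _; rewrite ?oppr_le0. Qed.

Lemma hdegmx_diag : D = diag_mx (\row_v deg v).
Proof.
by apply/matrixP => v w; rewrite !mxE; case: eqP => [->|]; rewrite ?mulr1n ?mulr0n.
Qed.

Lemma hdegmx_unit : no_isolated E -> D \in unitmx.
Proof.
move=> niE; rewrite hdegmx_diag unitmxE det_diag unitfE.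
by apply/prodf_neq0 => v _; rewrite mxE pnatr_eq0 -lt0n.
Qed.

Lemma hlapE : no_isolated E -> hlap R E = invmx D *m (D - A).
Proof. by move=> niE; rewrite /hlap mulmxBr mulVmx ?hdegmx_unit. Qed.

Lemma hpencil_entry lam v w :
  hpencil lam v w = (v == w)%:R * ((1 - lam) * deg v) + `|A v w|.
Proof.
rewrite ler0_norm ?hadj_le0 // !mxE; case: eqP => [->|_] /=.
  by rewrite mulr1n; ring.
by rewrite mulr0n; ring.
Qed.

Lemma tr_hpencil lam : (hpencil lam)^T = hpencil lam.
Proof. by rewrite /hpencil !linearB /= linearZ /= tr_hadj hdegmx_diag tr_diag_mx. Qed.

Lemma sum_norm_hadj_row c : uniform E c -> forall v,
  \sum_w `|A v w| = (c%:R - 1) * deg v.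
Proof.
move=> unE v.
have pairs w : `|A v w| = \sum_(e in E) ((v != w) && (v \in e) && (w \in e))%:R.
  rewrite mxE; case: eqP => [->|_] /=; first by rewrite normr0 big1.
  rewrite normrN normr_nat -sumr_const [RHS]big_mkcond [LHS]big_mkcond /=.
  by apply: eq_bigr => e _; rewrite !inE; case: (e \in E); case: (v \in e); case: (w \in e).
under eq_bigr do rewrite pairs.
rewrite exchange_big /hdeg -sumr_const mulr_sumr big_mkcond [RHS]big_mkcond /=.
apply: eq_bigr => e _; rewrite inE; case eE: (e \in E) => //=.
case ve: (v \in e) => /=; last by rewrite big1 // => w _; rewrite andbF.
rewrite mulr1 -(unE e eE) -sumr_const (bigD1 v ve) /= addrAC subrr add0r.
rewrite [RHS]big_mkcond /=.
apply: eq_bigr => w _; rewrite andbT eq_sym andbC; by case: (_ && _).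
Qed.

Lemma hlap_eigenvalue_of_pencil (g : 'rV[R]_n) mu : no_isolated E -> g != 0 ->
  g *m (D - A) = mu *: (g *m D) -> eigenvalue (hlap R E) mu.
Proof.
move=> niE g0 gM; apply/eigenvalueP; exists (g *m D).
  by rewrite hlapE // mulmxA mulmxK ?hdegmx_unit.
by apply: contra g0 => /eqP gD; rewrite -(mulmxK (hdegmx_unit niE) g) gD mul0mx.
Qed.

Lemma hpencil_psd lam : no_isolated E -> smallest_eigenvalue (hlap R E) lam ->
  forall f, 0 <= qform (hpencil lam) f.
Proof.
move=> niE [_ lam_min] f; rewrite qformBl qformZl subr_ge0.
have [n0|n_gt0] := posnP n.
  have qform_n0 (X : 'M[R]_n) : qform X f = 0.
    by rewrite qformE big1 // => i; move: (ltn_ord i); rewrite [X in (_ < X)%N]n0.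
  by rewrite !qform_n0 mulr0.
have Ms : (D - A)^T = D - A by rewrite linearB /= tr_hadj hdegmx_diag tr_diag_mx.
have d_gt0 v : 0 < (\row_v deg v) 0 v :> R by rewrite mxE ltr0n; exact: niE.
have [mu [[g g0 gM] ray]] := generalized_rayleigh_min n_gt0 d_gt0 Ms.
rewrite -hdegmx_diag in gM ray.
apply: le_trans (ray f); rewrite ler_wpM2r ?lam_min //.
  by rewrite hdegmx_diag qform_diag sumr_ge0 // => v _; rewrite mulr_ge0 ?sqr_ge0 ?ltW.
exact: hlap_eigenvalue_of_pencil gM.
Qed.

Lemma hlap_eigen_of_hpencil_qform_eq0 lam (h : 'rV[R]_n) : no_isolated E ->
  (forall f, 0 <= qform (hpencil lam) f) -> qform (hpencil lam) h = 0 ->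
  hlap R E *m h^T = lam *: h^T.
Proof.
move=> niE psd h0; have hX := psd_qform_kernel (tr_hpencil lam) psd h0.
have : hpencil lam *m h^T = 0 by rewrite -tr_hpencil -trmx_mul hX trmx0.
rewrite mulmxBl -scalemxAl => /eqP; rewrite subr_eq0 => /eqP Mh.
by rewrite hlapE // -mulmxA Mh -scalemxAr mulKmx ?hdegmx_unit.
Qed.

Lemma sum_qform_color_diff_hpencil c lam k (col : 'I_n -> 'I_k) : uniform E c ->
  \sum_i \sum_j qform (hpencil lam) (color_diff R col i j) =
  2 * \sum_v (k%:R * class_weight col v - (c%:R - k%:R + lam * (k%:R - 1)) * deg v).
Proof.
move=> unE; rewrite sum_qform_color_diff mulr_sumr; apply: eq_bigr => v _.
set X := hpencil lam.
have diag_part (P : pred 'I_n) : P v ->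
    \sum_(w | P w) (v == w)%:R * ((1 - lam) * deg v) = (1 - lam) * deg v.
  move=> Pv; rewrite (bigD1 v) //= eqxx mul1r big1 ?addr0 // => w /andP [_ /negbTE].
  by rewrite eq_sym => ->; rewrite mul0r.
have row_sum : \sum_w X v w = (1 - lam) * deg v + (c%:R - 1) * deg v.
  under eq_bigr do rewrite hpencil_entry.
  by rewrite big_split /= (diag_part xpredT) ?(sum_norm_hadj_row unE).
have class_sum : \sum_(w | col w == col v) X v w = (1 - lam) * deg v + class_weight col v.
  under eq_bigr do rewrite hpencil_entry.
  by rewrite big_split /= (diag_part (fun w => col w == col v)).
have -> : \sum_w X v w * (2 * k%:R * (col v == col w)%:R - 2) =
    2 * k%:R * \sum_(w | col w == col v) X v w - 2 * \sum_w X v w.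
  rewrite (big_mkcond (fun w => col w == col v)) !mulr_sumr -sumrB.
  apply: eq_bigr => w _; rewrite [col v == col w]eq_sym.
  by case: (col w == col v); rewrite /= ?mulr1n ?mulr0n; ring.
by rewrite class_sum row_sum; ring.
Qed.

Lemma chi_qt_coloring_surjective (q : R) k (col : 'I_n -> 'I_k) : (2 <= k)%N ->
  is_chi_qt E q k -> q_tailored E q col -> forall i, exists w, col w = i.
Proof.
move=> k2 [_ k_min] tc i.
case: (pickP (fun w => col w == i)) => [w /eqP <-|col_neq]; first by exists w.
exfalso; move: col k_min tc i col_neq; case: k k2 => [|[|k]] // _ col k_min tc i col_neq.
pose col' w := odflt ord0 (unlift i (col w)).
have same_class v w : (col' w == col' v) = (col w == col v).
  have neq u : i != col u by rewrite eq_sym col_neq.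
  case: (unlift_some (neq w)) => x lx ux; case: (unlift_some (neq v)) => y ly uy.
  by rewrite /col' ux uy /= lx ly; apply/eqP/eqP => [-> | /lift_inj ->].
have : admits_q_tailored E q k.+1 by exists col' => v; rewrite (eq_bigl _ _ (same_class v)).
by move/k_min; rewrite ltnn.
Qed.

End Hypergraph.

Theorem mainTheorem12 (R : realType) (n : nat) (E : {set {set 'I_n}})
  (c : nat) (q lam1 : R) (chi : nat) :
  (2 <= c)%N -> 0 <= q -> q <= (c%:R - 1) ->
  uniform E c -> E != set0 -> no_isolated E ->
  smallest_eigenvalue (hlap R E) lam1 ->
  is_chi_qt E q chi -> (2 <= chi)%N ->
  chi%:R = (c%:R - lam1) / (q + 1 - lam1) ->
  forall col : 'I_n -> 'I_chi, q_tailored E q col ->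
    (forall v, \sum_(w | col w == col v) `|hadj R E v w| = q * (hdeg E v)%:R) /\
    (forall i j : 'I_chi, i != j -> eigenfunction (hlap R E) (gij R col i j) lam1) /\
    lam1 = ((q + 1) * chi%:R - c%:R) / (chi%:R - 1).
Proof.
move=> _ _ _ unE _ niE lam1_min chi_qt chi2 chiE col tc.
have psd := hpencil_psd niE lam1_min.
have chi_gt1 : 1 < chi%:R :> R by rewrite ltr1n.
have lam1_rel := lam_relation_of_ratio (lt0r_neq0 (lt_trans ltr01 chi_gt1)) chiE.
have [pencil_eq0 tight] :
    (forall p, qform (hpencil E lam1) (color_diff R col p.1 p.2) = 0) /\
    (forall v, class_weight R E col v - q * (hdeg E v)%:R = 0).
  apply: (sum_ge0_eq_sum_le0 (k := 2 * chi%:R)) => [||v|].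
  - by rewrite mulr_gt0 ?(lt_trans ltr01 chi_gt1).
  - by move=> p; exact: psd.
  - by rewrite subr_le0; exact: tc.
  rewrite -(pair_bigA _ (fun i j => qform (hpencil E lam1) (color_diff R col i j))) /=.
  rewrite (sum_qform_color_diff_hpencil _ _ unE) -mulrA; congr (2 * _).
  by rewrite mulr_sumr; apply: eq_bigr => v _; rewrite lam1_rel; ring.
split; first by move=> v; apply/eqP; rewrite -subr_eq0 tight.
split; last by rewrite -lam1_rel mulfK // subr_eq0 gt_eqF.
move=> i j ij; have [w cw] := chi_qt_coloring_surjective chi2 chi_qt tc i.
split; first exact: gij_neq0 cw.
by rewrite gij_color_diff //; apply: hlap_eigen_of_hpencil_qform_eq0 (pencil_eq0 (i, j)).
Qed.
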